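(* Let $A:\mathbb{R}^n\to\mathbb{R}^n$ be a linear operator that is GTP (respectively, GSTP) with respect to a totally positive structure $\{K_1,\ldots,K_n\}$. Then the adjoint operator $A^*$ is GTP (respectively, GSTP) with respect to the totally positive structure $\{K_1^*,\ldots,K_n^*\}$.
   Context: A proper cone is a closed convex cone that is pointed and solid. $\wedge^j\mathbb{R}^n$ is the $j$th exterior power of $\mathbb{R}^n$, with inner product $\langle x_1\wedge\cdots\wedge x_j,y_1\wedge\cdots\wedge y_j\rangle=\det(\langle x_k,y_l\rangle)_{k,l=1}^j$; via these inner products dual spaces are identified with the spaces themselves, the adjoint $A^*$ is the transpose, and for a proper cone $K$ its adjoint cone is $K^*=\{x^*:\langle y,x^*\rangle\ge0\ \forall y\in K\}$. $\wedge^jA$ denotes the operator with $(\wedge^jA)(x_1\wedge\cdots\wedge x_j)=Ax_1\wedge\cdots\wedge Ax_j$. $B$ is $K$-nonnegative if $BK\subseteq K$, $K$-positive if $B(K\setminus\{0\})\subseteq\operatorname{int}K$. A totally positive structure is a family $\{K_1,\ldots,K_n\}$ with $K_j\subset\wedge^j\mathbb{R}^n$ proper cones; $A$ is GTP (GSTP) with respect to it if $\wedge^jA$ is $K_j$-nonnegative (resp. $K_j$-positive) for all $j=1,\ldots,n$. *)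

From HB Require Import structures.
From mathcomp Require Import all_boot all_order all_algebra.
From mathcomp Require Import all_classical all_reals all_analysis.
Set Implicit Arguments. Unset Strict Implicit. Unset Printing Implicit Defensive.
Import Order.TTheory GRing.Theory Num.Theory.
Import numFieldNormedType.Exports.
Local Open Scope classical_set_scope.
Local Open Scope ring_scope.

(* Index set of the standard basis e_S = e_{s_1} /\ ... /\ e_{s_j}
   (s_1 < ... < s_j) of the j-th exterior power of R^n:
   the j-element subsets S of {0,...,n-1}. *)
Definition ksub (n j : nat) := {S : {set 'I_n} | #|S| == j}.

Definition wdim (n j : nat) : nat := #|{: ksub n j}|.

(* Coordinates of /\^j R^n in the basis (e_S)_S: we identify /\^j R^n with
   column vectors indexed by enum_rank of the subsets. *)
Definition wspace (R : realType) (n j : nat) := 'cV[R]_(wdim n j).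

(* the a-th smallest element of S (a < j), for S a j-subset *)
Definition sidx (n j : nat) (S : ksub n j) (a : 'I_j) : 'I_n :=
  @enum_val _ (mem (val S)) (cast_ord (esym (eqP (valP S))) a).

Definition subset_of (n j : nat) (I : 'I_(wdim n j)) : ksub n j := enum_val I.

(* Matrix of /\^j A in the basis (e_S): entry (I, J) is the minor
   det A[I, J], since (/\^j A) e_J = A e_{j_1} /\ ... /\ A e_{j_j}
   = sum_I det A[I,J] e_I. *)
Definition wedge_op (R : realType) (n j : nat) (A : 'M[R]_n) : 'M[R]_(wdim n j) :=
  \matrix_(I, J) \det (\matrix_(a < j, b < j)
       A (sidx (subset_of I) a) (sidx (subset_of J) b)).

(* The inner product on /\^j R^n induced by det(<x_k, y_l>): in the basis
   (e_S) it is orthonormal, so it is the standard dot product. *)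
Definition winner (R : realType) (m : nat) (x y : 'cV[R]_m) : R :=
  \sum_(i < m) x i 0 * y i 0.

Definition convex_cone (R : realType) (m : nat) (K : set 'cV[R]_m) : Prop :=
  K 0 /\ (forall x y, K x -> K y -> K (x + y)) /\
  (forall (a : R) x, 0 <= a -> K x -> K (a *: x)).

Definition pointed (R : realType) (m : nat) (K : set 'cV[R]_m) : Prop :=
  forall x, K x -> K (- x) -> x = 0.

Definition solid (R : realType) (m : nat) (K : set 'cV[R]_m) : Prop :=
  (interior K) !=set0.

Definition proper_cone (R : realType) (m : nat) (K : set 'cV[R]_m) : Prop :=
  [/\ closed K, convex_cone K, pointed K & solid K].

Definition adjoint_cone (R : realType) (m : nat) (K : set 'cV[R]_m)
  : set 'cV[R]_m := [set xs | forall y, K y -> 0 <= winner y xs].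

Definition K_nonneg (R : realType) (m : nat) (K : set 'cV[R]_m) (B : 'M[R]_m)
  : Prop := forall x, K x -> K (B *m x).

Definition K_pos (R : realType) (m : nat) (K : set 'cV[R]_m) (B : 'M[R]_m)
  : Prop := forall x, K x -> x != 0 -> interior K (B *m x).

Definition TP_structure (R : realType) (n : nat)
  (K : forall j : nat, set (wspace R n j)) : Prop :=
  forall j, (1 <= j <= n)%N -> proper_cone (K j).

Definition GTP (R : realType) (n : nat) (K : forall j : nat, set (wspace R n j))
  (A : 'M[R]_n) : Prop :=
  forall j, (1 <= j <= n)%N -> K_nonneg (K j) (wedge_op j A).

Definition GSTP (R : realType) (n : nat) (K : forall j : nat, set (wspace R n j))
  (A : 'M[R]_n) : Prop :=
  forall j, (1 <= j <= n)%N -> K_pos (K j) (wedge_op j A).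

Definition adjoint_structure (R : realType) (n : nat)
  (K : forall j : nat, set (wspace R n j)) : forall j : nat, set (wspace R n j) :=
  fun j => adjoint_cone (K j).

From HB Require Import structures.
From mathcomp Require Import all_boot all_order all_algebra.
From mathcomp Require Import all_classical all_reals all_analysis.
From mathcomp Require Import ring lra.
Set Implicit Arguments.
Unset Strict Implicit.
Unset Printing Implicit Defensive.
Import Order.TTheory GRing.Theory Num.Theory.
Import numFieldNormedType.Exports.
Local Open Scope classical_set_scope.
Local Open Scope ring_scope.

(* Since <y, B^T x> = <B y, x> and the minors of A^T are the transposed minors
   of A (so that /\^j A^T = (/\^j A)^T), K-nonnegativity of /\^j A transfers
   to /\^j A^T on the adjoint cone K^*.  Strict positivity rests on one fact:
   a functional w that is strictly positive on K \ {0} is bounded below by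
   c |y| on K, by compactness of the unit slice of K, and therefore lies in the
   interior of K^*.  For x in K^* \ {0}, B^T x is such a functional whenever B
   maps K \ {0} into the interior of K.  The same fact gives the solidity of
   K^*: for K closed and pointed, each unit vector y of K is separated from -y
   by a functional of K^* obtained from the nearest point of K to -y; finitely
   many of them cover the unit slice, and their sum is strictly positive on
   K \ {0}. *)

Section NormedMatrix.
Variable R : realType.

Lemma mxentry_le_norm p q (A : 'M[R]_(p, q)) i j : `|A i j| <= `|A|.
Proof.
by rewrite [leRHS]/Num.norm /= mx_normrE; apply/bigmax_geP; right; exists (i, j).
Qed.

Lemma normr_trmx p q (A : 'M[R]_(p, q)) : `|A^T| = `|A|.
Proof.
suff le_trmx (p' q' : nat) (B : 'M[R]_(p', q')) : `|B^T| <= `|B|.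
  by apply/eqP; rewrite eq_le le_trmx -{1}(trmxK A) le_trmx.
rewrite [leLHS]/Num.norm /= mx_normrE; apply/bigmax_leP; split => // -[i j] _.
by rewrite mxE mxentry_le_norm.
Qed.

Lemma continuous_trmx p q : continuous (@trmx R p q).
Proof.
move=> A U /nbhs_ballP [e e0 He]; apply/nbhs_ballP; exists e => // B AB.
by apply: He; move: AB; rewrite -!ball_normE /ball_ /= -linearB /= normr_trmx.
Qed.

Lemma bounded_closed_compact_cV m (A : set 'cV[R]_m) (c : R) :
  closed A -> (forall x, A x -> `|x| <= c) -> compact A.
Proof.
move=> A_closed A_bounded.
have -> : A = trmx @` [set v | A v^T].
  by apply/seteqP; split => [x Ax|_ [v Av <-] //]; exists x^T; rewrite /= ?trmxK.
apply: continuous_compact; first by apply: continuous_subspaceT; exact: continuous_trmx.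
apply: bounded_closed_compact.
  exists c; split; first exact: num_real.
  by move=> M cM v Av /=; rewrite -normr_trmx (le_trans (A_bounded _ Av)) // ltW.
by apply: preimage_closed => // v _; exact: continuous_trmx.
Qed.

Lemma interior_normP m (A : set 'cV[R]_m) x :
  interior A x <-> exists2 e : R, 0 < e & forall y, `|x - y| < e -> A y.
Proof.
split => [/nbhs_ballP [e e0 He]|[e e0 He]].
  by exists e => // y xy; apply: He; rewrite -ball_normE.
by apply/nbhs_ballP; exists e => // y; rewrite -ball_normE; exact: He.
Qed.

End NormedMatrix.

Lemma slope_ge0 (R : realFieldType) (a b : R) : 0 <= b ->
  (forall t, 0 < t -> t <= 1 -> 0 <= 2 * t * a + t ^+ 2 * b) -> 0 <= a.
Proof.
move=> b0 H; rewrite leNgt; apply/negP => a0.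
have ba0 : 0 < b - a by lra.
pose t := - a / (b - a).
have t0 : 0 < t by rewrite divr_gt0 // oppr_gt0.
have t1 : t <= 1 by rewrite ler_pdivrMr // mul1r; lra.
have tb : t * b = - a + t * a by rewrite /t; field; rewrite gt_eqF.
have := H t t0 t1; rewrite (_ : _ + _ = t * a * (1 + t)); last first.
  by rewrite expr2 -[t * t * b]mulrA tb; ring.
by rewrite pmulr_lge0 ?pmulr_rge0 //; lra.
Qed.

Section Winner.
Variables (R : realType) (m : nat).
Implicit Types (x y z : 'cV[R]_m).

Lemma winnerC x y : winner x y = winner y x.
Proof. by apply: eq_bigr => i _; rewrite mulrC. Qed.

Lemma winnerDl x y z : winner (x + y) z = winner x z + winner y z.
Proof. by rewrite /winner -big_split; apply: eq_bigr => i _; rewrite !mxE mulrDl. Qed.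

Lemma winnerZl (a : R) x z : winner (a *: x) z = a * winner x z.
Proof. by rewrite /winner mulr_sumr; apply: eq_bigr => i _; rewrite !mxE mulrA. Qed.

Lemma winnerNl x z : winner (- x) z = - winner x z.
Proof. by rewrite -scaleN1r winnerZl mulN1r. Qed.

Lemma winnerNr x z : winner z (- x) = - winner z x.
Proof. by rewrite !(winnerC z) winnerNl. Qed.

Lemma winnerBl x y z : winner (x - y) z = winner x z - winner y z.
Proof. by rewrite winnerDl winnerNl. Qed.

Lemma winnerDr x y z : winner z (x + y) = winner z x + winner z y.
Proof. by rewrite !(winnerC z) winnerDl. Qed.

Lemma winnerZr (a : R) x z : winner z (a *: x) = a * winner z x.
Proof. by rewrite !(winnerC z) winnerZl. Qed.

Lemma winnerBr x y z : winner z (x - y) = winner z x - winner z y.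
Proof. by rewrite !(winnerC z) winnerBl. Qed.

Lemma winner0l z : winner 0 z = 0.
Proof. by rewrite -(scale0r 0) winnerZl mul0r. Qed.

Lemma winner0r z : winner z 0 = 0.
Proof. by rewrite winnerC winner0l. Qed.

Lemma winner_sumr y (s : seq 'cV[R]_m) :
  winner y (\sum_(v <- s) v) = \sum_(v <- s) winner y v.
Proof.
elim: s => [|a s IH]; first by rewrite !big_nil winner0r.
by rewrite !big_cons winnerDr IH.
Qed.

Lemma winner_add_scale x y (t : R) :
  winner (x + t *: y) (x + t *: y) =
  winner x x + 2 * t * winner y x + t ^+ 2 * winner y y.
Proof. by rewrite !(winnerDl, winnerDr, winnerZl, winnerZr) (winnerC x y); ring. Qed.

Lemma winner_ge0 x : 0 <= winner x x.
Proof. by apply: sumr_ge0 => i _; rewrite -expr2 sqr_ge0. Qed.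

Lemma winner_gt0 x : x != 0 -> 0 < winner x x.
Proof.
move=> x0; rewrite lt_def winner_ge0 andbT; apply: contra x0.
rewrite psumr_eq0 => [/allP x_eq0|i _]; last by rewrite -expr2 sqr_ge0.
apply/eqP/matrixP => i j; rewrite mxE (ord1 j).
by have := x_eq0 i (mem_index_enum i); rewrite -expr2 sqrf_eq0 => /eqP.
Qed.

Lemma winner_trmx_mul (B : 'M[R]_m) x y : winner y (B^T *m x) = winner (B *m y) x.
Proof.
rewrite /winner.
under eq_bigr => i _ do rewrite !mxE big_distrr /=.
under [RHS]eq_bigr => i _ do rewrite !mxE big_distrl /=.
rewrite exchange_big /=; apply: eq_bigr => i _; apply: eq_bigr => k _.
by rewrite !mxE; ring.
Qed.

Lemma ler_norm_winner x y : `|winner x y| <= m%:R * (`|x| * `|y|).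
Proof.
rewrite /winner (le_trans (ler_norm_sum _ _ _)) //.
rewrite mulr_natl -[m in _ *+ m]card_ord -sumr_const; apply: ler_sum => i _.
by rewrite normrM ler_pM ?mxentry_le_norm.
Qed.

Lemma sqr_norm_le_winner x : `|x| ^+ 2 <= winner x x.
Proof.
have [->|x0] := eqVneq x 0; first by rewrite normr0 expr0n /= winner_ge0.
have [[i j] ->] : exists i, `|x| = `|x i.1 i.2|.
  by apply: mx_norm_neq0; rewrite (_ : mx_norm x = `|x|) // normr_eq0.
rewrite /= (ord1 j) real_normK ?num_real // /winner (bigD1 i) //= lerDl.
by apply: sumr_ge0 => k _; rewrite -expr2 sqr_ge0.
Qed.

Lemma continuous_winnerl z : continuous (fun y => winner y z).
Proof.
apply: continuous_big => [[a b]|i _ y]; first exact: add_continuous.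
by apply: continuousM; [exact: coord_continuous | exact: cst_continuous].
Qed.

Lemma continuous_winner_diag : continuous (fun x => winner x x).
Proof.
apply: continuous_big => [[a b]|i _ y]; first exact: add_continuous.
by apply: continuousM; exact: coord_continuous.
Qed.

Lemma continuous_winnerr z : continuous (fun y => winner z y).
Proof. by under eq_fun do rewrite winnerC; exact: continuous_winnerl. Qed.

End Winner.

Section ConeDuality.
Variables (R : realType) (m : nat).
Implicit Types (K : set 'cV[R]_m) (B : 'M[R]_m) (p x y z w : 'cV[R]_m).

Lemma winner_interior_gt0 K z x :
  interior K z -> adjoint_cone K x -> x != 0 -> 0 < winner z x.
Proof.
move=> /interior_normP [e e0 zK] Kx x0.
pose d := e / (`|x| + 1).
have d0 : 0 < d by rewrite divr_gt0 // ltr_wpDl.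
have /Kx : K (z - d *: x).
  apply: zK; rewrite opprB addrC subrK normrZ gtr0_norm //.
  by rewrite /d mulrAC ltr_pdivrMr ?ltr_wpDl // ltr_pM2l // ltrDl.
rewrite winnerBl winnerZl subr_ge0; apply: lt_le_trans.
by rewrite mulr_gt0 // winner_gt0.
Qed.

Lemma closed_adjoint_cone K : closed (adjoint_cone K).
Proof.
have -> : adjoint_cone K = \bigcap_(y in K) (winner y @^-1` [set r | 0 <= r]).
  by apply/seteqP; split => x Kx y Ky; exact: Kx.
apply: closed_bigI => y _; apply: preimage_closed; last exact: closed_ge.
by move=> x _; exact: continuous_winnerr.
Qed.

Lemma convex_adjoint_cone K : convex_cone (adjoint_cone K).
Proof.
split; first by move=> y _; rewrite winner0r.
split => [x x' Kx Kx' y Ky|a x a0 Kx y Ky].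
  by rewrite winnerDr addr_ge0 ?Kx ?Kx'.
by rewrite winnerZr mulr_ge0 ?Kx.
Qed.

Lemma pointed_adjoint_cone K : solid K -> pointed (adjoint_cone K).
Proof.
move=> [z Kz] x Kx Knx; apply/eqP; apply: contraT => x0.
have zx_gt0 := winner_interior_gt0 Kz Kx x0.
have := winner_interior_gt0 Kz Knx; rewrite oppr_eq0 x0 winnerNr oppr_gt0 => /(_ isT).
by rewrite ltNge (ltW zx_gt0).
Qed.

Definition unit_slice K := K `&` [set y | `|y| = 1].

Lemma compact_unit_slice K : closed K -> compact (unit_slice K).
Proof.
move=> K_closed; apply: (@bounded_closed_compact_cV _ _ _ 1); last by move=> x [_ ->].
apply: closedI => //; apply: (@preimage_closed _ _ (fun y => `|y|) [set r : R | r = 1]).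
  by move=> x _; exact: norm_continuous.
exact: closed_eq.
Qed.

Lemma unit_slice_neq0 K y : unit_slice K y -> y != 0.
Proof. by case=> _ y1; rewrite -normr_eq0 /= y1 oner_eq0. Qed.

Lemma normalize_unit_slice K y :
  convex_cone K -> K y -> y != 0 -> unit_slice K (`|y|^-1 *: y).
Proof.
move=> [_ [_ KZ]] Ky y0; split; first by apply: KZ; rewrite // invr_ge0.
by rewrite /= normrZ normrV ?unitfE ?normr_eq0 // normr_id mulVf ?normr_eq0.
Qed.

Lemma coercive_of_strictly_positive K w : closed K -> convex_cone K ->
    (forall y, K y -> y != 0 -> 0 < winner y w) ->
  exists2 c : R, 0 < c & forall y, K y -> c * `|y| <= winner y w.
Proof.
move=> K_closed K_cone w_pos.
have [c c0 c_min] : exists2 c : R, 0 < c & forall y, unit_slice K y -> c <= winner y w.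
  have [[y0 Sy0]|S0] := pselect (unit_slice K !=set0); last first.
    by exists 1 => // y Sy; exfalso; apply: S0; exists y.
  have [y1 Sy1 y1_min] := compact_EVT_min (ex_intro _ y0 Sy0)
    (compact_unit_slice K_closed) (continuous_subspaceT (@continuous_winnerl _ _ w)).
  move: Sy1; rewrite inE => Sy1; exists (winner y1 w).
    by apply: w_pos (unit_slice_neq0 Sy1); case: Sy1.
  by move=> y Sy; apply: y1_min; rewrite inE.
exists c => // y Ky; have [->|y0] := eqVneq y 0; first by rewrite normr0 mulr0 winner0l.
have := c_min _ (normalize_unit_slice K_cone Ky y0).
by rewrite winnerZl ler_pdivlMl ?normr_gt0 // mulrC.
Qed.

Lemma interior_adjoint_cone_of_coercive K w (c : R) : 0 < c ->
  (forall y, K y -> c * `|y| <= winner y w) -> interior (adjoint_cone K) w.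
Proof.
move=> c0 w_coercive; apply/interior_normP.
have m1_gt0 : 0 < m%:R + 1 :> R by rewrite ltr_wpDl.
exists (c / (m%:R + 1)) => [|u wu y Ky]; first by rewrite divr_gt0.
rewrite -[u](subKr w) winnerBr subr_ge0.
rewrite (le_trans (ler_norm _)) // (le_trans (ler_norm_winner _ _)) //.
rewrite (le_trans _ (w_coercive _ Ky)) // mulrCA [c * _]mulrC ler_wpM2l //.
move: wu; rewrite ltr_pdivlMr // mulrC => /ltW; apply: le_trans.
by rewrite ler_wpM2r // lerDl.
Qed.

Lemma interior_adjoint_cone_of_strictly_positive K w : closed K -> convex_cone K ->
    (forall y, K y -> y != 0 -> 0 < winner y w) ->
  interior (adjoint_cone K) w.
Proof.
move=> K_closed K_cone w_pos.
have [c c0 w_coercive] := coercive_of_strictly_positive K_closed K_cone w_pos.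
exact: interior_adjoint_cone_of_coercive c0 w_coercive.
Qed.

Lemma winner_le_sub_far p z : (m%:R + 2) * `|p| <= `|z| ->
  winner p p <= winner (z - p) (z - p).
Proof.
move=> z_far; apply: le_trans (sqr_norm_le_winner (z - p)).
apply: le_trans (ler_norm _) _; apply: le_trans (ler_norm_winner p p) _.
have k0 : 0 <= m%:R :> R by [].
have kP_ge0 : 0 <= (m%:R + 1) * `|p| by rewrite mulr_ge0 ?addr_ge0.
have kP_le : (m%:R + 1) * `|p| <= `|z - p| by have := lerB_dist z p; lra.
have := ler_pM kP_ge0 kP_ge0 kP_le kP_le; rewrite expr2; nra.
Qed.

Lemma exists_nearest_point K p : closed K -> K 0 ->
  exists2 z0, K z0 &
    forall z, K z -> winner (z0 - p) (z0 - p) <= winner (z - p) (z - p).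
Proof.
move=> K_closed K0.
pose M := (m%:R + 2) * `|p|.
pose Kb := K `&` [set z | `|z| <= M].
have M0 : 0 <= M by rewrite mulr_ge0 // addr_ge0.
have Kb_compact : compact Kb.
  apply: (@bounded_closed_compact_cV _ _ _ M); last by move=> x [].
  apply: closedI => //.
  apply: (@preimage_closed _ _ (fun y => `|y|) [set r : R | r <= M]).
    by move=> x _; exact: norm_continuous.
  exact: closed_le.
have Kb0 : Kb 0 by split; rewrite //= normr0.
(* Outside the ball of radius M, every z is farther from p than 0 is, so it
   suffices to minimize over the compact set Kb. *)
have g_cont : continuous ((fun y => winner y y) \o (fun z => z - p)).
  move=> z; apply: continuous_comp; last exact: continuous_winner_diag.
  by apply: (continuousB (f := id) (g := fun=> p)); [exact: cvg_id|exact: cst_continuous].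
have [z0 Kbz0 z0_min] := compact_EVT_min (ex_intro _ 0 Kb0)
  Kb_compact (continuous_subspaceT g_cont).
move: Kbz0; rewrite inE => -[Kz0 _]; exists z0 => // z Kz.
have [zM|Mz] := leP `|z| M; first by apply: z0_min; rewrite inE.
apply: le_trans (winner_le_sub_far (ltW Mz)).
have := z0_min 0; rewrite inE /= sub0r winnerNl winnerC winnerNl opprK; exact.
Qed.

Lemma separate_from_cone K p : closed K -> convex_cone K -> ~ K p ->
  exists2 w, adjoint_cone K w & winner p w < 0.
Proof.
move=> K_closed [K0 [KD KZ]] Kp.
have [z0 Kz0 z0_min] := exists_nearest_point p K_closed K0.
pose w := z0 - p.
(* First-order optimality of z0 along the rays z0 + t y and (1 - t) z0. *)
have w_adj : adjoint_cone K w.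
  move=> y Ky; apply: (slope_ge0 (winner_ge0 y)) => t t0 _.
  have := z0_min _ (KD _ _ Kz0 (KZ _ _ (ltW t0) Ky)).
  by rewrite addrAC winner_add_scale -addrA lerDl.
have z0w_le0 : winner z0 w <= 0.
  rewrite -oppr_ge0 -winnerNl; apply: (slope_ge0 (winner_ge0 (- z0))) => t _ t1.
  have t1' : 0 <= 1 - t by rewrite subr_ge0.
  have := z0_min _ (KZ _ _ t1' Kz0).
  by rewrite scalerBl scale1r addrAC -scalerN winner_add_scale -addrA lerDl.
have w0 : w != 0 by apply: contra_not_neq Kp => /eqP; rewrite subr_eq0 => /eqP <-.
exists w => //; rewrite -[p](subKr z0) winnerBl -/w subr_lt0.
exact: le_lt_trans z0w_le0 (winner_gt0 w0).
Qed.

Lemma exists_strictly_positive K : closed K -> convex_cone K -> pointed K ->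
  exists w, forall y, K y -> y != 0 -> 0 < winner y w.
Proof.
move=> K_closed K_cone K_pointed.
pose H w := (fun y => winner y w) @^-1` [set r : R | 0 < r].
have H_open w : open (H w).
  by apply: open_comp; [move=> y _; exact: continuous_winnerl | exact: open_gt].
have slice_covered : unit_slice K `<=` cover (adjoint_cone K) H.
  move=> y y_slice; have [Ky _] := y_slice.
  have Kny : ~ K (- y).
    by move=> /(K_pointed _ Ky) y0; move: (unit_slice_neq0 y_slice); rewrite y0 eqxx.
  have [w w_adj yw] := separate_from_cone K_closed K_cone Kny.
  by exists w => //; rewrite /H /= -oppr_lt0 -winnerNl.
have := compact_unit_slice K_closed; rewrite compact_cover.
move=> /(_ _ _ H (fun w _ => H_open w) slice_covered) [D D_adj D_cover].
exists (\sum_(w <- finmap.enum_fset D) w) => y Ky y0.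
have y'_slice := normalize_unit_slice K_cone Ky y0.
have [w wD yw] := D_cover _ y'_slice.
suff : 0 < winner (`|y|^-1 *: y) (\sum_(w <- finmap.enum_fset D) w).
  by rewrite winnerZl pmulr_rgt0 // invr_gt0 normr_gt0.
rewrite winner_sumr (bigD1_seq w) ?finmap.fset_uniq //=.
apply: lt_le_trans yw _; rewrite lerDl big_seq_cond; apply: sumr_ge0 => v /andP[vD _].
by have := D_adj v vD; rewrite inE; apply; case: y'_slice.
Qed.

Lemma proper_adjoint_cone K : proper_cone K -> proper_cone (adjoint_cone K).
Proof.
move=> [K_closed K_cone K_pointed K_solid].
have [w w_pos] := exists_strictly_positive K_closed K_cone K_pointed.
split; [exact: closed_adjoint_cone | exact: convex_adjoint_cone |
        exact: pointed_adjoint_cone | exists w].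
exact: interior_adjoint_cone_of_strictly_positive.
Qed.

Lemma K_nonneg_adjoint K B : K_nonneg K B -> K_nonneg (adjoint_cone K) B^T.
Proof. by move=> B_nonneg x Kx y Ky; rewrite winner_trmx_mul; apply/Kx/B_nonneg. Qed.

Lemma K_pos_adjoint K B : closed K -> convex_cone K ->
  K_pos K B -> K_pos (adjoint_cone K) B^T.
Proof.
move=> K_closed K_cone B_pos x Kx x0.
apply: interior_adjoint_cone_of_strictly_positive => // y Ky y0.
by rewrite winner_trmx_mul (winner_interior_gt0 (B_pos _ Ky y0)).
Qed.

End ConeDuality.

Lemma wedge_op_trmx (R : realType) n j (A : 'M[R]_n) :
  wedge_op j A^T = (wedge_op j A)^T.
Proof.
apply/matrixP => I J; rewrite !mxE -det_tr; congr (\det _).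
by apply/matrixP => a b; rewrite !mxE.
Qed.

Theorem proposition14 (R : realType) (n : nat)
  (K : forall j : nat, set (wspace R n j)) (A : 'M[R]_n) :
  TP_structure K ->
  [/\ TP_structure (adjoint_structure K),
      (GTP K A -> GTP (adjoint_structure K) A^T) &
      (GSTP K A -> GSTP (adjoint_structure K) A^T)].
Proof.
move=> K_TP; split=> [j j_range|A_GTP j j_range|A_GSTP j j_range].
- exact: proper_adjoint_cone (K_TP j j_range).
- by rewrite wedge_op_trmx; apply: K_nonneg_adjoint; exact: A_GTP.
- have [K_closed K_cone _ _] := K_TP j j_range.
  by rewrite wedge_op_trmx; apply: K_pos_adjoint => //; exact: A_GSTP.
Qed.
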